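(* Assume (A1)–(A3) and (SH), and let $z_t$ be defined by $x_0:=x_1$, $z_t=x_t+\frac{\beta_{1,t}}{1-\beta_{1,t}}(x_t-x_{t-1})$. Then for every $t\ge1$, $\mathbb{E}[f(z_{t+1})-f(z_1)]\le T_1+T_2+T_3+T_4+T_5+T_6$, where $T_1=-\mathbb{E}\big[\sum_{i=1}^t\langle\nabla f(z_i),\frac{\beta_{1,i}}{1-\beta_{1,i}}(\frac{\alpha_i}{\sqrt{\hat v_i}}-\frac{\alpha_{i-1}}{\sqrt{\hat v_{i-1}}})\odot m_{i-1}\rangle\big]$, $T_2=-\mathbb{E}\big[\sum_{i=1}^t\alpha_i\langle\nabla f(z_i),g_i/\sqrt{\hat v_i}\rangle\big]$, $T_3=-\mathbb{E}\big[\sum_{i=1}^t\langle\nabla f(z_i),(\frac{\beta_{1,i+1}}{1-\beta_{1,i+1}}-\frac{\beta_{1,i}}{1-\beta_{1,i}})\alpha_im_i/\sqrt{\hat v_i}\rangle\big]$, $T_4=\mathbb{E}\big[\sum_{i=1}^t\frac32L\|(\frac{\beta_{1,i+1}}{1-\beta_{1,i+1}}-\frac{\beta_{1,i}}{1-\beta_{1,i}})\alpha_im_i/\sqrt{\hat v_i}\|^2\big]$, $T_5=\mathbb{E}\big[\sum_{i=1}^t\frac32L\|\frac{\beta_{1,i}}{1-\beta_{1,i}}(\frac{\alpha_i}{\sqrt{\hat v_i}}-\frac{\alpha_{i-1}}{\sqrt{\hat v_{i-1}}})\odot m_{i-1}\|^2\big]$, $T_6=\mathbb{E}\big[\sum_{i=1}^t\frac32L\|\alpha_ig_i/\sqrt{\hat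 v_i}\|^2\big]$.
   Context: Problem: minimize $f(x)=\mathbb{E}_\xi[f(x;\xi)]$ over $x\in\mathbb{R}^d$. All vector operations (division, square root, squaring) are coordinatewise, $\odot$ is the coordinatewise product, $\|\cdot\|$ is the Euclidean norm. Generalized Adam: given $x_1\in\mathbb{R}^d$, stepsizes $\alpha_t>0$, momentum parameters $\beta_{1,t}\in[0,1)$ and maps $h_t$, set $m_0=0$ and for $t=1,2,\dots$: $m_t=\beta_{1,t}m_{t-1}+(1-\beta_{1,t})g_t$; $\hat v_t=h_t(g_1,\dots,g_t)\in\mathbb{R}^d$ with strictly positive entries; $x_{t+1}=x_t-\alpha_t m_t/\sqrt{\hat v_t}$, where $g_t$ is a stochastic gradient evaluated at $x_t$. By convention $(\alpha_1/\sqrt{\hat v_1}-\alpha_0/\sqrt{\hat v_0})\odot m_0=0$ (the $i=1$ terms of $T_1$ and $T_5$ vanish). Assumptions: (A1) $f$ is differentiable, $\|\nabla f(x)-\nabla f(y)\|\le L\|x-y\|$ for all $x,y$, and $f$ attains its minimum at some $x^*$ with $f(x^* )>-\infty$. (A2) $\|\nabla f(x)\|\le H$ for all $x$ and $\|g_t\|\le H$ for all $t$ almost surely. (A3) $g_t=\nabla f(x_t)+\zeta_t$ where the noise $\zeta_t$ has zero mean conditionally on $g_1,\dots,g_{t-1}$. Expectations are over all randomness in $\{g_t\}$. Standing hypotheses (SH): $\beta_1\in[0,1)$ with $\beta_{1,t}\le\beta_1$ for all $t$, the sequence $\beta_{1,t}\in[0,1)$ is non-increasing, and there is $G>0$ with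 $\|\alpha_t m_t/\sqrt{\hat v_t}\|\le G$ for all $t$ almost surely. *)

From Stdlib Require Import Reals.
Open Scope R_scope.

(** Vectors of R^d are represented by functions nat -> R; only the
    coordinates j < d are ever used (sums, norms, inner products range over
    j < d).  All vector operations are coordinatewise. *)
Definition vec := nat -> R.

Fixpoint fsum (n : nat) (f : nat -> R) : R :=
  match n with
  | O => 0
  | S k => fsum k f + f k
  end.

Definition inner (d : nat) (u v : vec) : R := fsum d (fun j => u j * v j).
Definition norm (d : nat) (u : vec) : R := sqrt (inner d u u).

Definition vzero : vec := fun _ => 0.
Definition vadd (u v : vec) : vec := fun j => u j + v j.
Definition vsub (u v : vec) : vec := fun j => u j - v j.
Definition vscale (c : R) (u : vec) : vec := fun j => c * u j.
Definition vmul (u v : vec) : vec := fun j => u j * v j.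
Definition vdiv (u v : vec) : vec := fun j => u j / v j.
Definition vsqrt (u : vec) : vec := fun j => sqrt (u j).
Definition vconst (c : R) : vec := fun _ => c.

Definition on_Rd (d : nat) (f : vec -> R) : Prop :=
  forall x y : vec, (forall j, (j < d)%nat -> x j = y j) -> f x = f y.

Definition has_gradient (d : nat) (f : vec -> R) (gradf : vec -> vec) : Prop :=
  forall x : vec, forall eps : R, 0 < eps ->
    exists delta : R, 0 < delta /\
      forall y : vec, norm d (vsub y x) < delta ->
        Rabs (f y - f x - inner d (gradf x) (vsub y x)) <= eps * norm d (vsub y x).

(** Abstract expectation on a sample space Omega: a normalized, positive,
    linear functional on a vector space of integrable random variables. *)
Record expectation (Omega : Type) := {
  integrable : (Omega -> R) -> Prop;
  E : (Omega -> R) -> R;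
  integrable_const : forall c, integrable (fun _ => c);
  integrable_plus : forall X Y, integrable X -> integrable Y ->
      integrable (fun w => X w + Y w);
  integrable_scal : forall c X, integrable X -> integrable (fun w => c * X w);
  E_const : forall c, E (fun _ => c) = c;
  E_plus : forall X Y, integrable X -> integrable Y ->
      E (fun w => X w + Y w) = E X + E Y;
  E_scal : forall c X, integrable X -> E (fun w => c * X w) = c * E X;
  E_mono : forall X Y, integrable X -> integrable Y ->
      (forall w, X w <= Y w) -> E X <= E Y
}.
Arguments integrable {Omega}.
Arguments E {Omega}.

Section Adam.
Variable Omega : Type.
Variable alpha : nat -> R.
Variable beta : nat -> R.
Variable g : nat -> Omega -> vec.
Variable h : nat -> (nat -> vec) -> vec.
Variable x1 : vec.

Definition vhat (t : nat) (w : Omega) : vec := h t (fun i => g i w).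

Fixpoint mom (t : nat) (w : Omega) : vec :=
  match t with
  | O => vzero
  | S k => fun j => beta (S k) * mom k w j + (1 - beta (S k)) * g (S k) w j
  end.

Definition eta (t : nat) (w : Omega) : vec :=
  vdiv (vconst (alpha t)) (vsqrt (vhat t w)).

Definition step (t : nat) (w : Omega) : vec := vmul (eta t w) (mom t w).

(** xseq k = x_{k+1}: x_1 given, x_{t+1} = x_t - alpha_t m_t / sqrt(hat v_t) *)
Fixpoint xseq (k : nat) (w : Omega) : vec :=
  match k with
  | O => x1
  | S k' => vsub (xseq k' w) (step (S k') w)
  end.

Definition xit (t : nat) (w : Omega) : vec :=
  match t with
  | O => x1
  | S k => xseq k w
  end.

Definition ratio (t : nat) : R := beta t / (1 - beta t).

Definition zit (t : nat) (w : Omega) : vec :=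
  vadd (xit t w) (vscale (ratio t) (vsub (xit t w) (xit (t - 1) w))).

(** beta_{1,i}/(1-beta_{1,i}) (alpha_i/sqrt(hat v_i) - alpha_{i-1}/sqrt(hat v_{i-1})) odot m_{i-1};
    for i = 1 this vanishes since m_0 = 0. *)
Definition vecA (i : nat) (w : Omega) : vec :=
  vscale (ratio i) (vmul (vsub (eta i w) (eta (i - 1) w)) (mom (i - 1) w)).

Definition vecB (i : nat) (w : Omega) : vec :=
  vscale (ratio (S i) - ratio i) (step i w).

Definition vecC (i : nat) (w : Omega) : vec := vmul (eta i w) (g i w).

Definition T1_rv (d : nat) (gradf : vec -> vec) (t : nat) (w : Omega) : R :=
  - fsum t (fun k => inner d (gradf (zit (S k) w)) (vecA (S k) w)).
Definition T2_rv (d : nat) (gradf : vec -> vec) (t : nat) (w : Omega) : R :=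
  - fsum t (fun k => alpha (S k) *
        inner d (gradf (zit (S k) w)) (vdiv (g (S k) w) (vsqrt (vhat (S k) w)))).
Definition T3_rv (d : nat) (gradf : vec -> vec) (t : nat) (w : Omega) : R :=
  - fsum t (fun k => inner d (gradf (zit (S k) w)) (vecB (S k) w)).
Definition T4_rv (d : nat) (L : R) (t : nat) (w : Omega) : R :=
  fsum t (fun k => 3 / 2 * L * (norm d (vecB (S k) w)) ^ 2).
Definition T5_rv (d : nat) (L : R) (t : nat) (w : Omega) : R :=
  fsum t (fun k => 3 / 2 * L * (norm d (vecA (S k) w)) ^ 2).
Definition T6_rv (d : nat) (L : R) (t : nat) (w : Omega) : R :=
  fsum t (fun k => 3 / 2 * L * (norm d (vecC (S k) w)) ^ 2).

End Adam.

(** Write r_t = beta_{1,t}/(1-beta_{1,t}).  A direct computation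
    from the Adam recursion shows that the auxiliary iterates move by
        z_{i+1} - z_i = -(A_i + B_i + C_i),
    where A_i, B_i, C_i are the vectors inside T_1/T_5, T_3/T_4 and T_6
    (the identity only uses 1 + r_i = 1/(1-beta_{1,i})).  The descent lemma
    for an L-smooth function, f(y) <= f(x) + <grad f(x), y-x> + L/2 |y-x|^2,
    together with |a+b+c|^2 <= 3(|a|^2+|b|^2+|c|^2), bounds each increment
    f(z_{i+1}) - f(z_i) by the i-th summands of T_1..T_6.  Summing over
    i = 1..t gives the inequality pointwise on the sample space, and
    monotonicity and linearity of the expectation conclude. *)

From Pilot Require Import Defs.
From Stdlib Require Import Reals Lra Lia FunctionalExtensionality.
From Coquelicot Require Import Coquelicot.
(* Coquelicot also defines [norm]; re-import Defs so that [norm] is the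
   Euclidean norm of R^d. *)
Import Defs.
Open Scope R_scope.

Lemma fsum_ext n f g :
  (forall j, (j < n)%nat -> f j = g j) -> fsum n f = fsum n g.
Proof.
  induction n as [|n IH]; simpl; intros Hfg; [reflexivity|].
  rewrite IH by (intros; apply Hfg; lia). rewrite Hfg by lia. reflexivity.
Qed.

Lemma fsum_plus n f g : fsum n (fun j => f j + g j) = fsum n f + fsum n g.
Proof. induction n as [|n IH]; simpl; [lra|]. rewrite IH; lra. Qed.

Lemma fsum_scal n c f : fsum n (fun j => c * f j) = c * fsum n f.
Proof. induction n as [|n IH]; simpl; [lra|]. rewrite IH; lra. Qed.

Lemma fsum_le n f g :
  (forall j, (j < n)%nat -> f j <= g j) -> fsum n f <= fsum n g.
Proof.
  induction n as [|n IH]; simpl; intros Hfg; [lra|].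
  assert (f n <= g n) by (apply Hfg; lia).
  assert (fsum n f <= fsum n g) by (apply IH; intros; apply Hfg; lia).
  lra.
Qed.

Lemma inner_self_nonneg d u : 0 <= inner d u u.
Proof.
  unfold inner. replace 0 with (fsum d (fun _ => 0)).
  - apply fsum_le; intros; nra.
  - clear; induction d; simpl; lra.
Qed.

Lemma norm_nonneg d u : 0 <= norm d u.
Proof. apply sqrt_pos. Qed.

Lemma norm_sq d u : norm d u ^ 2 = inner d u u.
Proof. unfold norm. rewrite <- Rsqr_pow2. apply Rsqr_sqrt, inner_self_nonneg. Qed.

Lemma inner_scale_r d a c u : inner d a (vscale c u) = c * inner d a u.
Proof. unfold inner, vscale. rewrite <- fsum_scal. apply fsum_ext; intros; ring. Qed.

Lemma inner_sub_l d a b u : inner d (vsub a b) u = inner d a u - inner d b u.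
Proof.
  unfold inner, vsub.
  transitivity (fsum d (fun j => a j * u j + -1 * (b j * u j))).
  - apply fsum_ext; intros; ring.
  - rewrite fsum_plus, fsum_scal. ring.
Qed.

Lemma inner_add_r d a u v : inner d a (vadd u v) = inner d a u + inner d a v.
Proof. unfold inner, vadd. rewrite <- fsum_plus. apply fsum_ext; intros; ring. Qed.

Lemma norm_scale d c u : norm d (vscale c u) = Rabs c * norm d u.
Proof.
  unfold norm. rewrite <- sqrt_Rsqr_abs, <- sqrt_mult by
    (apply Rle_0_sqr || apply inner_self_nonneg).
  f_equal. unfold inner, vscale, Rsqr. rewrite <- fsum_scal.
  apply fsum_ext; intros; ring.
Qed.

Lemma nonneg_quadratic_discriminant A B C :
  0 <= C -> (forall l, 0 <= A - 2 * l * B + l * l * C) -> B * B <= A * C.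
Proof.
  intros HC Hq. destruct (Req_dec C 0) as [HC0|HC0].
  - subst C. destruct (Req_dec B 0) as [->|HB]; [nra|].
    specialize (Hq ((A + 1) / (2 * B))).
    assert (2 * ((A + 1) / (2 * B)) * B = A + 1) by (field; exact HB). nra.
  - specialize (Hq (B / C)).
    assert (Hval : A - 2 * (B / C) * B + B / C * (B / C) * C = (A * C - B * B) / C)
      by (field; exact HC0).
    rewrite Hval in Hq.
    assert (0 <= (A * C - B * B) / C * C) by (apply Rmult_le_pos; lra).
    replace ((A * C - B * B) / C * C) with (A * C - B * B) in * by (field; exact HC0).
    lra.
Qed.

(** Cauchy-Schwarz, from the discriminant of l |-> |u - l v|^2 >= 0; it
    controls the change of the gradient in the descent lemma. *)
Lemma cauchy_schwarz d u v : inner d u v <= norm d u * norm d v.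
Proof.
  assert (Hexpand : forall l, inner d (vsub u (vscale l v)) (vsub u (vscale l v))
                    = inner d u u - 2 * l * inner d u v + l * l * inner d v v).
  { intros l. unfold inner, vsub, vscale.
    transitivity (fsum d (fun j => (u j * u j + (-2 * l) * (u j * v j))
                                   + (l * l) * (v j * v j))).
    - apply fsum_ext; intros; ring.
    - rewrite !fsum_plus, !fsum_scal. ring. }
  assert (Hsq : inner d u v * inner d u v <= inner d u u * inner d v v).
  { apply nonneg_quadratic_discriminant; [apply inner_self_nonneg|].
    intros l. rewrite <- Hexpand. apply inner_self_nonneg. }
  unfold norm. rewrite <- sqrt_mult by apply inner_self_nonneg.
  apply Rle_trans with (Rabs (inner d u v)); [apply Rle_abs|].
  rewrite <- sqrt_Rsqr_abs. apply sqrt_le_1_alt. exact Hsq.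
Qed.

Lemma norm_sum3_sq d a b c :
  norm d (vadd (vadd a b) c) ^ 2 <= 3 * (norm d a ^ 2 + norm d b ^ 2 + norm d c ^ 2).
Proof.
  rewrite !norm_sq. unfold inner, vadd. rewrite <- !fsum_plus, <- fsum_scal.
  apply fsum_le; intros j _.
  pose proof (pow2_ge_0 (a j - b j)). pose proof (pow2_ge_0 (b j - c j)).
  pose proof (pow2_ge_0 (a j - c j)). nra.
Qed.

Section Smooth.
Variable d : nat.
Variable f : vec -> R.
Variable gradf : vec -> vec.
Variable L : R.
Hypothesis Hgrad : has_gradient d f gradf.
Hypothesis HLip : forall x y, norm d (vsub (gradf x) (gradf y)) <= L * norm d (vsub x y).

Lemma directional_derivative x u s :
  derivable_pt_lim (fun s => f (vadd x (vscale s u))) s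
                   (inner d (gradf (vadd x (vscale s u))) u).
Proof.
  intros eps Heps.
  set (nu := norm d u). assert (Hnu : 0 <= nu) by apply norm_nonneg.
  assert (Heps' : 0 < eps / 2 / (nu + 1)) by (apply Rdiv_lt_0_compat; lra).
  destruct (Hgrad (vadd x (vscale s u)) _ Heps') as [delta [Hdelta Hfrechet]].
  assert (Hdelta' : 0 < delta / (nu + 1)) by (apply Rdiv_lt_0_compat; lra).
  exists (mkposreal _ Hdelta'). intros k Hk0 Hk. simpl in Hk.
  assert (Hinc : vsub (vadd x (vscale (s + k) u)) (vadd x (vscale s u)) = vscale k u).
  { apply functional_extensionality; intros j. unfold vsub, vadd, vscale. ring. }
  specialize (Hfrechet (vadd x (vscale (s + k) u))).
  rewrite Hinc, norm_scale, inner_scale_r in Hfrechet. fold nu in Hfrechet.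
  assert (Hk_pos : 0 < Rabs k) by (apply Rabs_pos_lt; exact Hk0).
  assert (Hk_small : Rabs k * nu < delta).
  { apply Rle_lt_trans with (Rabs k * (nu + 1)); [nra|].
    apply Rmult_lt_reg_r with (/ (nu + 1)); [apply Rinv_0_lt_compat; lra|].
    rewrite Rmult_assoc, Rinv_r by lra. unfold Rdiv in Hk. lra. }
  specialize (Hfrechet Hk_small).
  set (D := f (vadd x (vscale (s + k) u)) - f (vadd x (vscale s u))) in *.
  set (I := inner d (gradf (vadd x (vscale s u))) u) in *.
  replace (D / k - I) with ((D - k * I) / k) by (field; exact Hk0).
  unfold Rdiv. rewrite Rabs_mult, Rabs_inv.
  apply Rmult_lt_reg_r with (Rabs k); [exact Hk_pos|].
  rewrite Rmult_assoc, Rinv_l by lra.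
  apply Rle_lt_trans with (eps / 2 / (nu + 1) * (Rabs k * nu)); [lra|].
  assert (nu / (nu + 1) < 1).
  { apply Rmult_lt_reg_r with (nu + 1); [lra|].
    unfold Rdiv. rewrite Rmult_assoc, Rinv_l by lra. lra. }
  replace (eps / 2 / (nu + 1) * (Rabs k * nu)) with (eps / 2 * Rabs k * (nu / (nu + 1)))
    by (field; lra).
  assert (0 < eps / 2 * Rabs k) by nra. nra.
Qed.

Lemma gradient_increment_bound x u c :
  0 <= c -> inner d (vsub (gradf (vadd x (vscale c u))) (gradf x)) u <= L * c * norm d u ^ 2.
Proof.
  intros Hc.
  assert (Hseg : vsub (vadd x (vscale c u)) x = vscale c u).
  { apply functional_extensionality; intros j. unfold vsub, vadd, vscale. ring. }
  pose proof (cauchy_schwarz d (vsub (gradf (vadd x (vscale c u))) (gradf x)) u) as Hcs.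
  pose proof (HLip (vadd x (vscale c u)) x) as Hlip.
  rewrite Hseg, norm_scale, Rabs_pos_eq in Hlip by exact Hc.
  pose proof (norm_nonneg d u).
  assert (norm d (vsub (gradf (vadd x (vscale c u))) (gradf x)) * norm d u
          <= L * (c * norm d u) * norm d u) by (apply Rmult_le_compat_r; assumption).
  nra.
Qed.

Lemma descent_lemma x y :
  f y <= f x + inner d (gradf x) (vsub y x) + L / 2 * norm d (vsub y x) ^ 2.
Proof.
  set (u := vsub y x). set (K := inner d (gradf x) u). set (M := L / 2 * norm d u ^ 2).
  set (p := fun s => vadd x (vscale s u)).
  set (psi := fun s => f (p s) - (f x + s * K + M * (s * s))).
  set (dpsi := fun s => inner d (gradf (p s)) u - (K + M * (2 * s))).
  assert (Hderiv : forall c, 0 <= c <= 1 -> derivable_pt_lim psi c (dpsi c)).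
  { intros c _. apply is_derive_Reals.
    apply (is_derive_minus (fun s => f (p s)) (fun s => f x + s * K + M * (s * s))).
    - apply is_derive_Reals, directional_derivative.
    - auto_derive; [exact I | ring]. }
  destruct (MVT_cor2 psi dpsi 0 1 Rlt_0_1 Hderiv) as [c [Hmvt Hc]].
  assert (Hdpsi : dpsi c <= 0).
  { pose proof (gradient_increment_bound x u c ltac:(lra)) as Hinc.
    rewrite inner_sub_l in Hinc. unfold dpsi, p. fold K.
    replace (M * (2 * c)) with (L * c * norm d u ^ 2) by (unfold M; field).
    fold K in Hinc. lra. }
  assert (Hp0 : p 0 = x).
  { apply functional_extensionality; intros j. unfold p, vadd, vscale. ring. }
  assert (Hp1 : p 1 = y).
  { apply functional_extensionality; intros j. unfold p, u, vadd, vscale, vsub. ring. }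
  unfold psi in Hmvt. rewrite Hp0, Hp1, Rminus_0_r, Rmult_1_r in Hmvt. fold u K M.
  lra.
Qed.

Lemma lipschitz_const_nonneg : 0 <= L \/ forall u, norm d u = 0.
Proof.
  destruct (Rle_lt_dec 0 L) as [HL|HL]; [left; exact HL|right; intros u].
  assert (Hu : vsub u vzero = u).
  { apply functional_extensionality; intros j. unfold vsub, vzero. ring. }
  pose proof (HLip u vzero) as Hlip. rewrite Hu in Hlip.
  pose proof (norm_nonneg d (vsub (gradf u) (gradf vzero))).
  pose proof (norm_nonneg d u). nra.
Qed.

Lemma descent_three_parts x a b c :
  f (vsub x (vadd (vadd a b) c))
  <= f x - inner d (gradf x) a - inner d (gradf x) b - inner d (gradf x) c
     + 3 / 2 * L * (norm d a ^ 2 + norm d b ^ 2 + norm d c ^ 2).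
Proof.
  set (s := vadd (vadd a b) c).
  assert (Hs : vsub (vsub x s) x = vscale (-1) s).
  { apply functional_extensionality; intros j. unfold vsub, vscale. ring. }
  pose proof (descent_lemma x (vsub x s)) as Hdesc.
  rewrite Hs, inner_scale_r, norm_scale, Rabs_m1, Rmult_1_l in Hdesc.
  subst s. rewrite !inner_add_r in Hdesc.
  pose proof (norm_sum3_sq d a b c) as Hsq.
  destruct lipschitz_const_nonneg as [HL|Hzero].
  - assert (L / 2 * norm d (vadd (vadd a b) c) ^ 2
            <= L / 2 * (3 * (norm d a ^ 2 + norm d b ^ 2 + norm d c ^ 2)))
      by (apply Rmult_le_compat_l; lra).
    lra.
  - rewrite !Hzero in *. lra.
Qed.

End Smooth.

Section Adam.
Variable Omega : Type.
Variables alpha beta : nat -> R.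
Variable g : nat -> Omega -> vec.
Variable h : nat -> (nat -> vec) -> vec.
Variable x1 : vec.
Hypothesis Hbeta_ne1 : forall t, (1 <= t)%nat -> beta t <> 1.

Let z := zit Omega alpha beta g h x1.
Let A := vecA Omega alpha beta g h.
Let B := vecB Omega alpha beta g h.
Let C := vecC Omega alpha g h.

(** The increment identity z_{i+1} = z_i - (A_i + B_i + C_i), i >= 1.  It
    rests on (1 + r_i)(1 - beta_{1,i}) = 1 and (1 + r_i) beta_{1,i} = r_i. *)
Lemma z_increment k w :
  z (S (S k)) w = vsub (z (S k) w) (vadd (vadd (A (S k) w) (B (S k) w)) (C (S k) w)).
Proof.
  assert (Hb : forall i, 1 - beta (S i) <> 0).
  { intros i. apply Rminus_eq_contra, not_eq_sym, Hbeta_ne1. lia. }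
  pose proof (Hb k). pose proof (Hb (S k)).
  apply functional_extensionality; intros j.
  unfold z, A, B, C, zit, vecA, vecB, vecC, ratio, vadd, vscale, vsub, vmul.
  destruct k as [|k].
  - simpl. unfold step, vmul, vsub. simpl mom. unfold vzero. field. split; assumption.
  - replace (S (S (S k)) - 1)%nat with (S (S k)) by lia.
    replace (S (S k) - 1)%nat with (S k) by lia.
    simpl. unfold step, vsub, vmul. simpl mom. field. split; assumption.
Qed.

Lemma inner_vecC d a i w :
  inner d a (C i w) = alpha i * inner d a (vdiv (g i w) (vsqrt (vhat Omega g h i w))).
Proof.
  unfold inner. rewrite <- fsum_scal. apply fsum_ext; intros j _.
  unfold C, vecC, eta, vmul, vdiv, vconst, Rdiv. ring.
Qed.

Variable d : nat.
Variable f : vec -> R.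
Variable gradf : vec -> vec.
Variable L : R.
Hypothesis Hgrad : has_gradient d f gradf.
Hypothesis HLip : forall x y, norm d (vsub (gradf x) (gradf y)) <= L * norm d (vsub x y).

Lemma z_step_bound k w :
  f (z (S (S k)) w) - f (z (S k) w)
  <= - inner d (gradf (z (S k) w)) (A (S k) w)
     - alpha (S k) * inner d (gradf (z (S k) w))
                       (vdiv (g (S k) w) (vsqrt (vhat Omega g h (S k) w)))
     - inner d (gradf (z (S k) w)) (B (S k) w)
     + 3 / 2 * L * norm d (B (S k) w) ^ 2
     + 3 / 2 * L * norm d (A (S k) w) ^ 2
     + 3 / 2 * L * norm d (C (S k) w) ^ 2.
Proof.
  rewrite z_increment.
  pose proof (descent_three_parts d f gradf L Hgrad HLip (z (S k) w)
                (A (S k) w) (B (S k) w) (C (S k) w)) as Hdesc.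
  rewrite inner_vecC in Hdesc. lra.
Qed.

Lemma z_pathwise_bound t w :
  f (z (S t) w) - f (z 1 w)
  <= T1_rv Omega alpha beta g h x1 d gradf t w + T2_rv Omega alpha beta g h x1 d gradf t w
   + T3_rv Omega alpha beta g h x1 d gradf t w + T4_rv Omega alpha beta g h d L t w
   + T5_rv Omega alpha beta g h d L t w + T6_rv Omega alpha g h d L t w.
Proof.
  induction t as [|k IH].
  - unfold T1_rv, T2_rv, T3_rv, T4_rv, T5_rv, T6_rv. simpl. lra.
  - pose proof (z_step_bound k w) as Hstep.
    unfold T1_rv, T2_rv, T3_rv, T4_rv, T5_rv, T6_rv in *. cbn [fsum].
    fold z A B C in IH |- *. lra.
Qed.

End Adam.

Lemma E_le_sum6 (Omega : Type) (P : expectation Omega) (X Y1 Y2 Y3 Y4 Y5 Y6 : Omega -> R) :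
  integrable P X -> integrable P Y1 -> integrable P Y2 -> integrable P Y3 ->
  integrable P Y4 -> integrable P Y5 -> integrable P Y6 ->
  (forall w, X w <= Y1 w + Y2 w + Y3 w + Y4 w + Y5 w + Y6 w) ->
  E P X <= E P Y1 + E P Y2 + E P Y3 + E P Y4 + E P Y5 + E P Y6.
Proof.
  intros IX I1 I2 I3 I4 I5 I6 Hle.
  pose proof (integrable_plus _ P _ _ I1 I2) as I12.
  pose proof (integrable_plus _ P _ _ I12 I3) as I13.
  pose proof (integrable_plus _ P _ _ I13 I4) as I14.
  pose proof (integrable_plus _ P _ _ I14 I5) as I15.
  pose proof (integrable_plus _ P _ _ I15 I6) as I16.
  apply Rle_trans with (E P (fun w => Y1 w + Y2 w + Y3 w + Y4 w + Y5 w + Y6 w)).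
  - exact (E_mono _ P _ _ IX I16 Hle).
  - rewrite (E_plus _ P _ _ I15 I6), (E_plus _ P _ _ I14 I5), (E_plus _ P _ _ I13 I4),
      (E_plus _ P _ _ I12 I3), (E_plus _ P _ _ I1 I2).
    lra.
Qed.

Theorem lemma2
  (d : nat) (Omega : Type) (P : expectation Omega)
  (f : vec -> R) (gradf : vec -> vec) (L H G beta1 : R) (xstar : vec)
  (alpha beta : nat -> R) (g : nat -> Omega -> vec)
  (h : nat -> (nat -> vec) -> vec) (x1 : vec)
  (* (A1) *)
  (Hf_Rd : on_Rd d f)
  (Hgrad : has_gradient d f gradf)
  (HLip : forall x y, norm d (vsub (gradf x) (gradf y)) <= L * norm d (vsub x y))
  (Hmin : forall x, f xstar <= f x)
  (* (A2) *)
  (HgradH : forall x, norm d (gradf x) <= H)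
  (HgH : forall t w, (1 <= t)%nat -> norm d (g t w) <= H)
  (* (A3): the noise zeta_t = g_t - grad f(x_t) has zero mean conditionally
     on g_1, ..., g_{t-1} *)
  (Hnoise : forall (t j : nat) (phi : (nat -> vec) -> R),
      (1 <= t)%nat -> (j < d)%nat ->
      (exists B, forall Gs, Rabs (phi Gs) <= B) ->
      (forall Gs Gs', (forall i, (1 <= i)%nat -> (i < t)%nat -> Gs i = Gs' i) ->
                      phi Gs = phi Gs') ->
      integrable P (fun w => (g t w j - gradf (xit Omega alpha beta g h x1 t w) j)
                              * phi (fun i => g i w)) ->
      E P (fun w => (g t w j - gradf (xit Omega alpha beta g h x1 t w) j)
                     * phi (fun i => g i w)) = 0)
  (* generalized Adam: stepsizes, maps h_t *)
  (Halpha : forall t, (1 <= t)%nat -> 0 < alpha t)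
  (Hh_causal : forall t Gs Gs', (forall i, (1 <= i)%nat -> (i <= t)%nat -> Gs i = Gs' i) ->
                  h t Gs = h t Gs')
  (Hh_pos : forall t Gs j, (1 <= t)%nat -> (j < d)%nat -> 0 < h t Gs j)
  (* (SH) *)
  (Hbeta1 : 0 <= beta1 < 1)
  (Hbeta_range : forall t, (1 <= t)%nat -> 0 <= beta t < 1)
  (Hbeta_le : forall t, (1 <= t)%nat -> beta t <= beta1)
  (Hbeta_noninc : forall t, (1 <= t)%nat -> beta (S t) <= beta t)
  (HGpos : 0 < G)
  (HG : forall t w, (1 <= t)%nat -> norm d (step Omega alpha beta g h t w) <= G)
  (t : nat) (Ht : (1 <= t)%nat)
  (* the expectations occurring in the statement exist *)
  (Hint0 : integrable P (fun w => f (zit Omega alpha beta g h x1 (S t) w)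
                                  - f (zit Omega alpha beta g h x1 1 w)))
  (Hint1 : integrable P (T1_rv Omega alpha beta g h x1 d gradf t))
  (Hint2 : integrable P (T2_rv Omega alpha beta g h x1 d gradf t))
  (Hint3 : integrable P (T3_rv Omega alpha beta g h x1 d gradf t))
  (Hint4 : integrable P (T4_rv Omega alpha beta g h d L t))
  (Hint5 : integrable P (T5_rv Omega alpha beta g h d L t))
  (Hint6 : integrable P (T6_rv Omega alpha g h d L t)) :
  E P (fun w => f (zit Omega alpha beta g h x1 (S t) w) - f (zit Omega alpha beta g h x1 1 w))
  <= E P (T1_rv Omega alpha beta g h x1 d gradf t) + E P (T2_rv Omega alpha beta g h x1 d gradf t)
   + E P (T3_rv Omega alpha beta g h x1 d gradf t) + E P (T4_rv Omega alpha beta g h d L t)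
   + E P (T5_rv Omega alpha beta g h d L t) + E P (T6_rv Omega alpha g h d L t).
Proof.
  assert (Hbeta_ne1 : forall i, (1 <= i)%nat -> beta i <> 1)
    by (intros i Hi; apply Rlt_not_eq, Hbeta_range, Hi).
  apply E_le_sum6; try assumption.
  intros w.
  exact (z_pathwise_bound Omega alpha beta g h x1 Hbeta_ne1 d f gradf L Hgrad HLip t w).
Qed.
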